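(* Let $\mathbb{F}$ be a finite field with $q$ elements, let $T,n,r$ be positive integers, and let $X$ be a uniformly random matrix in $\mathbb{F}^{T\times n}$. If $r^n\cdot q^{\binom{r+T}{r}-n}\ge1$, then $$\mathbb{E}[\operatorname{rank}(X^r)]\ge n\left(1-\frac{\ln r}{\ln q}\right)-\frac{1}{\ln q}.$$
   Context: For $X\in\mathbb{F}^{T\times n}$, $X^r\in\mathbb{F}^{\binom{r+T}{r}\times n}$ is the matrix whose rows are all coordinatewise products of at most $r$ rows of $X$, products with repeated rows included (one row for each multiset of at most $r$ row indices, the empty product being the all-ones row); i.e., the matrix of all monomials of total degree at most $r$ in the rows of $X$. *)

From Stdlib Require Import Reals.
From HB Require Import structures.
From mathcomp Require Import all_boot all_order all_algebra.
From mathcomp Require Import Rstruct.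
Set Implicit Arguments. Unset Strict Implicit. Unset Printing Implicit Defensive.
Import Order.TTheory GRing.Theory Num.Theory.
Local Open Scope ring_scope.

(* Multisets of at most r elements of the row-index set 'I_T, encoded by their
   multiplicity (exponent) vectors e with \sum_i e i <= r.  There are
   'C(r+T, r) of them. *)
Definition msets (T r : nat) :=
  {e : {ffun 'I_T -> 'I_r.+1} | (\sum_i (e i : nat) <= r)%N}.

(* X^r : one row per multiset of at most r row indices, the row being the
   coordinatewise product of the corresponding rows of X (with repetitions);
   the empty multiset gives the all-ones row. *)
Definition Xpow (F : fieldType) (T n r : nat) (X : 'M[F]_(T, n))
  : 'M[F]_(#|{: msets T r}|, n) :=
  \matrix_(k < #|{: msets T r}|, j < n)
     \prod_(i < T) X i j ^+ (val (enum_val k) i : nat).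

Definition exp_rank (F : finFieldType) (T n r : nat) : R :=
  (\sum_(X : 'M[F]_(T, n)) (\rank (Xpow r X))%:R) / (#|F| ^ (T * n))%:R.

From Stdlib Require Import Reals.
From HB Require Import structures.
From mathcomp Require Import all_boot all_order all_algebra.
From mathcomp Require Import Rstruct.
From mathcomp Require Import ring lra.
Import Order.TTheory GRing.Theory Num.Theory.
Set Implicit Arguments. Unset Strict Implicit. Unset Printing Implicit Defensive.
Local Open Scope ring_scope.

(* Let M = 'C(r+T, r) be the number of rows of X^r and q = #|F|.  For a nonzero
   row c, the entries of c X^r are the values at the n independent uniform
   columns of X of a nonzero polynomial of degree at most r in T variables, so
   by Schwartz-Zippel c X^r = 0 with probability at most (r/q)^n.  As
   q^(M - rank X^r) counts the c with c X^r = 0, this gives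
   E[q^(M - rank X^r)] <= 1 + q^(M-n) r^n <= 2 q^(M-n) r^n, the last step being
   the hypothesis.  Jensen's inequality for exp turns this into
   q^(M - E[rank X^r]) <= 2 q^(M-n) r^n, and taking logarithms (ln 2 <= 1)
   gives the bound. *)

Section FfunCons.
Variable A : finType.

Definition fcons T (a : A) (y : {ffun 'I_T -> A}) : {ffun 'I_T.+1 -> A} :=
  [ffun j => if unlift ord0 j is Some j' then y j' else a].

Definition ftail T (x : {ffun 'I_T.+1 -> A}) : {ffun 'I_T -> A} :=
  [ffun j => x (lift ord0 j)].

Lemma fcons0 T a (y : {ffun 'I_T -> A}) : fcons a y ord0 = a.
Proof. by rewrite ffunE unlift_none. Qed.

Lemma fconsS T a (y : {ffun 'I_T -> A}) j : fcons a y (lift ord0 j) = y j.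
Proof. by rewrite ffunE liftK. Qed.

Lemma ftail_fcons T a (y : {ffun 'I_T -> A}) : ftail (fcons a y) = y.
Proof. by apply/ffunP => j; rewrite ffunE fconsS. Qed.

Lemma fcons_eta T (x : {ffun 'I_T.+1 -> A}) : fcons (x ord0) (ftail x) = x.
Proof.
by apply/ffunP => j; rewrite ffunE; case: unliftP => [j'|] ->; rewrite ?ffunE.
Qed.

Lemma big_ffunS (R : Type) (idx : R) (op : Monoid.com_law idx) T
    (G : {ffun 'I_T.+1 -> A} -> R) :
  \big[op/idx]_x G x = \big[op/idx]_a \big[op/idx]_(y : {ffun 'I_T -> A}) G (fcons a y).
Proof.
rewrite pair_big (reindex (fun p : A * {ffun 'I_T -> A} => fcons p.1 p.2)) //=.
exists (fun x : {ffun 'I_T.+1 -> A} => (x ord0, ftail x)) => [[a y] _|x _] /=.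
  by rewrite fcons0 ftail_fcons.
exact: fcons_eta.
Qed.

Lemma sum_nat_of_bool (P : pred A) : (\sum_x P x)%N = #|P|.
Proof.
by rewrite -sum1_card [RHS]big_mkcond; apply: eq_bigr => x _; rewrite unfold_in.
Qed.

Lemma card_ffunS T (P : pred {ffun 'I_T.+1 -> A}) :
  #|P| = (\sum_(y : {ffun 'I_T -> A}) #|[pred a | P (fcons a y)]|)%N.
Proof.
rewrite -sum1_card big_mkcond big_ffunS exchange_big /=.
by apply: eq_bigr => y _; rewrite -sum1_card [RHS]big_mkcond.
Qed.

End FfunCons.

Section SchwartzZippel.
Variable F : finFieldType.
Local Notation q := #|F|.

Definition monomial_sum (I : finType) T (c : I -> F) (e : I -> 'I_T -> nat)
    (x : {ffun 'I_T -> F}) : F :=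
  \sum_i c i * \prod_k x k ^+ e i k.

Lemma card_roots_sum (b : nat -> F) K : b K != 0 ->
  (#|[pred a : F | (\sum_(k < K.+1) a ^+ k * b k == 0)%R]| <= K)%N.
Proof.
move=> bK; pose p : {poly F} := \poly_(k < K.+1) b k.
have pE (a : F) : \sum_(k < K.+1) a ^+ k * b k = p.[a].
  by rewrite horner_poly; apply: eq_bigr => k _; rewrite mulrC.
have p_neq0 : p != 0.
  by apply: contraNneq bK => /(congr1 (coefp K)); rewrite /= coef_poly ltnSn coef0 => ->.
rewrite -ltnS; apply: leq_trans (size_poly K.+1 b).
rewrite (eq_card (B := [pred a | root p a])) => [|a]; last by rewrite !inE pE.
rewrite cardE; apply: max_poly_roots p_neq0 _ (enum_uniq _).
by apply/allP => a; rewrite mem_enum.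
Qed.

Lemma card_zeros_fcons T (f : {ffun 'I_T.+1 -> F} -> F)
    (g : nat -> {ffun 'I_T -> F} -> F) K :
  (forall a y, f (fcons a y) = \sum_(k < K.+1) a ^+ k * g k y) ->
  (#|[pred x | (f x == 0)%R]| <= #|[pred y | (g K y == 0)%R]| * q + K * q ^ T)%N.
Proof.
move=> fE; rewrite card_ffunS.
apply: (@leq_trans (\sum_(y : {ffun 'I_T -> F}) ((g K y == 0)%R * q + K))).
  apply: leq_sum => y _; have [_|gK_neq0] := eqVneq (g K y) 0.
    by rewrite mul1n (leq_trans (max_card _)) ?leq_addr.
  apply: leq_trans _ (leq_addl _ K).
  apply: leq_trans (card_roots_sum (b := g^~ y) gK_neq0).
  by apply: subset_leq_card; apply/subsetP => a; rewrite !inE fE.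
rewrite big_split /= -big_distrl sum_nat_const card_ffun card_ord mulnC.
by rewrite sum_nat_of_bool.
Qed.

Definition slice_coef (I : finType) T (c : I -> F) (e : I -> 'I_T.+1 -> nat)
    (k : nat) (i : I) : F :=
  if e i ord0 == k then c i else 0.

Definition tail_exp (I : finType) T (e : I -> 'I_T.+1 -> nat) (i : I) (j : 'I_T)
    : nat :=
  e i (lift ord0 j).

Lemma monomial_sum_fcons (I : finType) T (c : I -> F) (e : I -> 'I_T.+1 -> nat)
    K a y :
  (forall i, c i != 0 -> (e i ord0 <= K)%N) ->
  monomial_sum c e (fcons a y) =
  \sum_(k < K.+1) a ^+ k * monomial_sum (slice_coef c e k) (tail_exp e) y.
Proof.
move=> e0K; under [RHS]eq_bigr => k _ do rewrite mulr_sumr.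
rewrite exchange_big /=; apply: eq_bigr => i _; rewrite /slice_coef.
have [->|ci] := eqVneq (c i) 0.
  by rewrite mul0r big1 // => k _; case: eqP; rewrite !(mul0r, mulr0).
have ei0 : (e i ord0 < K.+1)%N by rewrite ltnS e0K.
rewrite (bigD1 (Ordinal ei0)) //= eqxx [X in _ + X]big1 ?addr0 => [|k].
  rewrite big_ord_recl fcons0 mulrCA; congr (_ * (_ * _)).
  by apply: eq_bigr => j _; rewrite fconsS.
by rewrite -val_eqE /= eq_sym => /negbTE ->; rewrite mul0r mulr0.
Qed.

(* Induction on T: with K the largest exponent of x_0, the coefficient of
   x_0^K is again a monomial sum, of degree at most d - K. *)
Lemma card_zeros_monomial_sum (I : finType) T (c : I -> F) (e : I -> 'I_T -> nat) d :
  (forall i j, c i != 0 -> c j != 0 -> e i =1 e j -> i = j) ->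
  (forall i, c i != 0 -> (\sum_k e i k <= d)%N) ->
  (exists i, c i != 0) ->
  (#|[pred x | (monomial_sum c e x == 0)%R]| * q <= d * q ^ T)%N.
Proof.
elim: T I c e d => [|T IH] I c e d e_inj e_deg [i0 ci0].
  rewrite eq_card0 // => x; rewrite !inE /monomial_sum (bigD1 i0) //=.
  rewrite big_ord0 mulr1 big1 ?addr0 ?(negbTE ci0) // => i i_neq0.
  have [->|ci] := eqVneq (c i) 0; first by rewrite mul0r.
  by case/eqP: i_neq0; apply: e_inj => // -[].
have [i1 ci1 i1_max] := @arg_maxnP _ i0 (fun i => c i != 0) (e^~ ord0) ci0.
set K := e i1 ord0; set c' := slice_coef c e K.
have c'_supp i : c' i != 0 -> e i ord0 = K /\ c i != 0.
  by rewrite /c' /slice_coef; case: (e i ord0 =P K) => // _; rewrite eqxx.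
have e_degS i : c i != 0 -> (e i ord0 + \sum_j tail_exp e i j <= d)%N.
  by move=> ci; rewrite -big_ord_recl e_deg.
have Kd : (K <= d)%N by apply: leq_trans (e_degS _ ci1); apply: leq_addr.
have zeros_c' :
    (#|[pred y | (monomial_sum c' (tail_exp e) y == 0)%R]| * q <= (d - K) * q ^ T)%N.
  apply: IH; last by exists i1; rewrite /c' /slice_coef eqxx.
  - move=> i j /c'_supp[eiK ci] /c'_supp[ejK cj] eij; apply: e_inj => // k.
    by case: (unliftP ord0 k) => [k'|] ->; [apply: eij | rewrite eiK ejK].
  - by move=> i /c'_supp[eiK ci]; rewrite leq_subRL // -eiK e_degS.
have zeros_c :=
  card_zeros_fcons (g := fun k => monomial_sum (slice_coef c e k) (tail_exp e))
                   (fun a y => monomial_sum_fcons a y i1_max).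
apply: leq_trans (leq_mul zeros_c (leqnn q)) _; rewrite mulnDl.
rewrite (leq_trans (leq_add (leq_mul zeros_c' (leqnn q)) (leqnn _))) //.
by rewrite -!mulnA -mulnDl subnK // expnSr.
Qed.

End SchwartzZippel.

Section Annihilators.
Variable F : finFieldType.
Local Notation q := #|F|.

Lemma card_annihilators m n (A : 'M[F]_(m, n)) :
  #|[pred c : 'rV_m | c *m A == 0]| = (q ^ (m - \rank A))%N.
Proof.
rewrite -mxrank_ker -[\rank _]mul1n -card_mx; set K := kermx A.
have injK : injective (mulmxr (row_base K)).
  have /row_freeP[K' K'K] := row_base_free K.
  by move=> ?; apply: can_inj (mulmxr K') _ => u; rewrite /= -mulmxA K'K mulmx1.
rewrite -(card_image (injK 1%N)); apply: eq_card => v.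
by rewrite inE -sub_kermx -/K -(eq_row_base K) (sameP submxP codomP).
Qed.

Variables T n r : nat.
Local Notation M := #|{: msets T r}|.

Definition msets_exp (k : 'I_M) (i : 'I_T) : nat := val (enum_val k) i.

Lemma Xpow_mulE (c : 'rV[F]_M) (X : 'M[F]_(T, n)) j :
  (c *m Xpow r X) 0 j = monomial_sum (c 0) msets_exp [ffun i => X i j].
Proof.
rewrite mxE; apply: eq_bigr => k _; rewrite mxE; congr (_ * _).
by apply: eq_bigr => i _; rewrite ffunE.
Qed.

Lemma card_zeros_msets_sum (c : 'rV[F]_M) : c != 0 ->
  (#|[pred x | (monomial_sum (c 0) msets_exp x == 0)%R]| * q <= r * q ^ T)%N.
Proof.
move=> c_neq0; apply: card_zeros_monomial_sum.
- move=> k k' _ _ ekk; apply/enum_val_inj/val_inj/ffunP => i; exact/val_inj/ekk.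
- by move=> k _; exact: (valP (enum_val k)).
- apply/existsP; apply: contraR c_neq0 => /existsPn c0; apply/eqP/rowP => k.
  by rewrite mxE; apply/eqP; move: (c0 k); rewrite negbK.
Qed.

Lemma card_Xpow_annihilated (c : 'rV[F]_M) : c != 0 ->
  (#|[pred X : 'M[F]_(T, n) | (c *m Xpow r X == 0)%R]| * q ^ n <= r ^ n * q ^ (T * n))%N.
Proof.
move=> c_neq0; set Z := [pred x | (monomial_sum (c 0) msets_exp x == 0)%R].
pose cols (X : 'M[F]_(T, n)) := [ffun j : 'I_n => [ffun i => X i j]].
have cols_inj : injective cols.
  move=> X Y /ffunP colsXY; apply/matrixP => i j.
  by move/ffunP: (colsXY j) => /(_ i); rewrite !ffunE.
have : (#|[pred X : 'M[F]_(T, n) | (c *m Xpow r X == 0)%R]| <= #|Z| ^ n)%N.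
  rewrite -(card_imset _ cols_inj) -[n in (_ <= _ ^ n)%N]card_ord -card_ffun_on.
  apply/subset_leq_card/subsetP => _ /imsetP[X XZ ->].
  apply/ffun_onP => j; rewrite ffunE inE.
  by move: XZ; rewrite inE => /eqP/matrixP/(_ 0 j); rewrite Xpow_mulE mxE => ->.
move=> card_le; apply: leq_trans (leq_mul card_le (leqnn (q ^ n))) _.
rewrite mulnC -expnMn mulnC expnM -expnMn.
have [->|n_gt0] := posnP n; first by rewrite !expn0.
by rewrite leq_exp2r // card_zeros_msets_sum.
Qed.

Lemma sum_exp_corank :
  (q ^ n * \sum_(X : 'M[F]_(T, n)) q ^ (M - \rank (Xpow r X))
     <= q ^ (T * n) * (q ^ n + q ^ M * r ^ n))%N.
Proof.
(* Count the pairs (c, X) with c X^r = 0; the row c = 0 pairs with every X. *)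
under eq_bigr => X _ do rewrite -card_annihilators -sum_nat_of_bool.
rewrite exchange_big /= (bigD1 0) //= (eq_bigr (fun _ => 1%N)); last first.
  by move=> X _; rewrite mul0mx eqxx.
rewrite sum_nat_const card_mx muln1 !mulnDr mulnC leq_add2l big_distrr /=.
apply: (@leq_trans (\sum_(c : 'rV[F]_M | c != 0) r ^ n * q ^ (T * n))).
  by apply: leq_sum => c c_neq0; rewrite mulnC sum_nat_of_bool card_Xpow_annihilated.
rewrite sum_nat_const [X in (_ <= X)%N]mulnC -mulnA leq_mul //.
by apply: leq_trans (max_card _) _; rewrite card_mx mul1n.
Qed.

End Annihilators.

Lemma card_msets T r : #|{: msets T r}| = 'C(r + T, r).
Proof.
rewrite card_sig -sum1_card.
pose to_ffun (t : T.-tuple 'I_r.+1) := [ffun i => tnth t i].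
rewrite (reindex to_ffun) /=; last first.
  exists (fun e : {ffun 'I_T -> 'I_r.+1} => [tuple e i | i < T]) => [t _|e _].
    by apply: eq_from_tnth => i; rewrite tnth_mktuple ffunE.
  by apply/ffunP => i; rewrite ffunE tnth_mktuple.
rewrite sum1dep_card -bin_sub ?leq_addr // addKn [(r + T)%N]addnC.
rewrite -card_partial_ord_partitions; apply: eq_card => t.
by rewrite !inE big_tuple; under eq_bigr do rewrite ffunE.
Qed.

Lemma exp_gt0 (x : R) : 0 < exp x.
Proof. exact/RltP/exp_pos. Qed.

Lemma exp_mean_le (I : finType) (x : I -> R) : (0 < #|I|)%N ->
  #|I|%:R * exp ((\sum_i x i) / #|I|%:R) <= \sum_i exp (x i).
Proof.
move=> I_gt0; set N : R := #|I|%:R; set m := (\sum_i x i) / N.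
have tangent i : exp m * (1 + (x i - m)) <= exp (x i).
  have -> : exp (x i) = exp m * exp (x i - m).
    by rewrite expRD RplusE RminusE addrC subrK.
  by apply: ler_wpM2l; [exact/ltW/exp_gt0 | apply/RleP/exp_ineq1_le].
apply: le_trans (ler_sum _ (fun i _ => tangent i)).
rewrite -mulr_sumr big_split sumrB /= !sumr_const -[(m *+ _)]mulr_natr.
by rewrite divfK ?pnatr_eq0 -?lt0n // subrr addr0 mulrC.
Qed.

Lemma exp_nat_mul_ln (x : R) k : 0 < x -> exp (k%:R * ln x) = x ^+ k.
Proof.
by move=> /RltP x_gt0; rewrite -INRE -RpowE -ln_pow ?exp_ln //; apply: pow_lt.
Qed.

Lemma ler_ln (x y : R) : 0 < x -> x <= y -> ln x <= ln y.
Proof.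
move=> x_gt0; rewrite le_eqVlt => /predU1P[-> //|x_lt_y].
by apply/ltW/RltP/ln_increasing; apply/RltP.
Qed.

Lemma ln2_le1 : ln 2%:R <= 1 :> R.
Proof.
rewrite -[leRHS]ln_exp; apply: ler_ln => //.
by apply/RleP; exact: exp_ineq1_le.
Qed.

Lemma lnM (x y : R) : 0 < x -> 0 < y -> ln (x * y) = ln x + ln y.
Proof. by move=> /RltP x_gt0 /RltP y_gt0; exact: ln_mult. Qed.

Lemma lnXn (x : R) k : 0 < x -> ln (x ^+ k) = k%:R * ln x.
Proof. by move=> /RltP x_gt0; rewrite -RpowE ln_pow // INRE. Qed.

Lemma ge_of_exp_le (Q rho E : R) (n M : nat) : 1 < Q -> 0 < rho ->
  Q ^+ n * exp (ln Q * (M%:R - E)) <= 2%:R * rho ^+ n * Q ^+ M ->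
  n%:R * (1 - ln rho / ln Q) - 1 / ln Q <= E.
Proof.
move=> Q_gt1 rho_gt0 bound; have Q_gt0 : 0 < Q := lt_trans ltr01 Q_gt1.
have lnQ_gt0 : 0 < ln Q.
  by rewrite -[ltLHS]ln_1; apply/RltP/ln_increasing; apply/RltP.
have := ler_ln (mulr_gt0 (exprn_gt0 _ Q_gt0) (exp_gt0 _)) bound.
rewrite !lnM ?mulr_gt0 ?exprn_gt0 ?exp_gt0 ?ltr0n //.
rewrite ln_exp !lnXn // RmultE RminusE => ln_bound.
rewrite -subr_ge0 -(pmulr_rge0 _ lnQ_gt0).
have -> : ln Q * (E - (n%:R * (1 - ln rho / ln Q) - 1 / ln Q)) =
          E * ln Q - n%:R * ln Q + n%:R * ln rho + 1 by field; rewrite gt_eqF.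
by have := ln2_le1; lra.
Qed.

Section ExpectedCorank.
Variables (F : finFieldType) (T n r : nat).
Local Notation Q := (#|F|%:R : R).
Local Notation M := #|{: msets T r}|.

Lemma exp_corank_le :
  Q ^+ n * exp (ln Q * (M%:R - exp_rank F T n r)) <= Q ^+ n + Q ^+ M * r%:R ^+ n.
Proof.
have q_gt0 : (0 < #|F|)%N by rewrite (ltn_trans _ (card_finNzRing_gt1 F)).
have N_gt0 : 0 < ((#|F| ^ (T * n))%N%:R : R) by rewrite ltr0n expn_gt0 q_gt0.
pose corank (X : 'M[F]_(T, n)) : R := ln Q * (M%:R - (\rank (Xpow r X))%:R).
have mean : (\sum_X corank X) / #|{: 'M[F]_(T, n)}|%:R =
            ln Q * (M%:R - exp_rank F T n r).
  rewrite /exp_rank -mulr_sumr sumrB sumr_const card_mx -mulrA mulrBl.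
  by rewrite -[_ *+ (_ ^ _)]mulr_natr mulfK ?gt_eqF.
have corankE X : exp (corank X) = (#|F| ^ (M - \rank (Xpow r X)))%:R.
  by rewrite /corank -natrB ?rank_leq_row // mulrC exp_nat_mul_ln ?natrX ?ltr0n.
have := exp_mean_le corank; rewrite RdivE mean (eq_bigr _ (fun X _ => corankE X)).
rewrite -natr_sum card_mx expn_gt0 q_gt0 => /(_ isT) jensen.
have := sum_exp_corank F T n r; rewrite -(ler_nat R) !natrM natrD natrM !natrX.
move=> /(le_trans (ler_wpM2l (ltW (exprn_gt0 _ _)) jensen)).
by rewrite mulrCA natrX ler_pM2l ?exprn_gt0 ?ltr0n //; apply.
Qed.

End ExpectedCorank.

Unset Implicit Arguments.

Theorem fact4p7 (F : finFieldType) (T n r : nat) :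
  (0 < T)%N -> (0 < n)%N -> (0 < r)%N ->
  1 <= (r%:R : R) ^+ n * (#|F|%:R : R) ^ ('C(r + T, r)%:Z - n%:Z) ->
  n%:R * (1 - ln r%:R / ln #|F|%:R) - 1 / ln #|F|%:R <= exp_rank F T n r.
Proof.
move=> _ _ r_gt0 hyp; set Q : R := #|F|%:R.
have Q_gt1 : 1 < Q by rewrite ltr1n card_finNzRing_gt1.
have QM : Q ^+ n <= r%:R ^+ n * Q ^+ #|{: msets T r}|.
  have -> : Q ^+ #|{: msets T r}| = Q ^ ('C(r + T, r)%:Z - n%:Z) * Q ^+ n.
    by rewrite card_msets !exprnP -expfzDr ?subrK // gt_eqF ?(lt_trans ltr01).
  by rewrite mulrA ler_peMl ?exprn_ge0 ?ler0n.
apply: (ge_of_exp_le Q_gt1 (_ : 0 < r%:R)); first by rewrite ltr0n.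
apply: le_trans (exp_corank_le F T n r) _.
by rewrite -mulrA mulr_natl mulr2n [_ * r%:R ^+ n]mulrC lerD2r.
Qed.
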